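(* Let $(E,\|\cdot\|)$ be a real Banach space, $I=[a,b]$ a closed real interval, $E_0=C(I,E)$ the space of continuous functions $\varphi:I\to E$ with the supremum norm $\|\varphi\|_0=\sup\{\|\varphi(t)\|: t\in I\}$, fix $c\in I$, and let $\mathcal{R}_c=\{\varphi\in E_0: \|\varphi\|_0=\|\varphi(c)\|\}$. The following are equivalent: (a) $\mathcal{R}_c$ is algebraically closed, i.e. $\varphi,\xi\in\mathcal{R}_c$ implies $\varphi-\xi\in\mathcal{R}_c$; (b) $\mathcal{R}_c$ is additive, i.e. $\varphi,\psi\in\mathcal{R}_c$ implies $\varphi+\psi\in\mathcal{R}_c$; (c) $\mathcal{R}_c$ is a linear subspace of $E_0$. *)

From HB Require Import structures.
From mathcomp Require Import all_boot all_order all_algebra.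
From mathcomp Require Import all_classical all_reals all_analysis.
Set Implicit Arguments. Unset Strict Implicit. Unset Printing Implicit Defensive.
Import Order.TTheory GRing.Theory Num.Theory.
Import numFieldNormedType.Exports.
Local Open Scope classical_set_scope.
Local Open Scope ring_scope.

(* E_0 = C([a,b], E): functions continuous on the closed interval [a,b]
   (represented as functions R -> E; values outside [a,b] are irrelevant). *)
Definition E0 (R : realType) (E : normedModType R) (a b : R) : set (R -> E) :=
  [set phi | {within `[a, b], continuous phi}].

Definition supnorm (R : realType) (E : normedModType R) (a b : R) (phi : R -> E) : R :=
  sup [set `|phi t| | t in `[a, b]].

Definition Rc (R : realType) (E : normedModType R) (a b c : R) : set (R -> E) :=
  [set phi | E0 a b phi /\ supnorm a b phi = `|phi c|].

Definition is_linear_subspace (R : realType) (E : normedModType R)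
    (S : set (R -> E)) : Prop :=
  S (fun _ => 0) /\
  (forall phi psi, S phi -> S psi -> S (phi + psi)) /\
  (forall (k : R) phi, S phi -> S (k *: phi)).

From HB Require Import structures.
From mathcomp Require Import all_boot all_order all_algebra.
From mathcomp Require Import all_classical all_reals all_analysis.
Import Order.TTheory GRing.Theory Num.Theory.
Import numFieldNormedType.Exports.
Set Implicit Arguments. Unset Strict Implicit. Unset Printing Implicit Defensive.
Local Open Scope classical_set_scope.
Local Open Scope ring_scope.

(* Any subtraction-closed set is additive, as x + y = x - ((y - y) - y).
   Conversely, R_c is always closed under scalar multiples, since scaling
   multiplies every pointwise norm by |k|; so additivity already gives both
   closure under subtraction and linearity. *)

Section SubtractionClosed.
Variables (V : zmodType) (S : set V).

Lemma subr_closed_addr_closed :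
  (forall x y, S x -> S y -> S (x - y)) -> forall x y, S x -> S y -> S (x + y).
Proof.
move=> Ssub x y Sx Sy.
have S0 : S 0 by rewrite -(subrr y); exact: Ssub.
have -> : x + y = x - (0 - y) by rewrite sub0r opprK.
exact: Ssub _ _ Sx (Ssub _ _ S0 Sy).
Qed.

Lemma addr_closed_subr_closed : (forall x, S x -> S (- x)) ->
  (forall x y, S x -> S y -> S (x + y)) -> forall x y, S x -> S y -> S (x - y).
Proof. by move=> SN Sadd x y Sx Sy; apply: Sadd => //; exact: SN. Qed.

End SubtractionClosed.

Section NormAttainedAt.
Variables (R : realType) (E : normedModType R) (a b c : R).
Hypothesis hab : a <= b.
Hypothesis hc : c \in `[a, b].

Lemma E0_comp (g : E -> E) (phi : R -> E) :
  continuous g -> E0 a b phi -> E0 a b (g \o phi).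
Proof. by move=> g_cont phi_cont; apply: within_continuous_comp => // x _. Qed.

Lemma E0_norm_has_ubound (phi : R -> E) :
  E0 a b phi -> has_ubound [set `|phi t| | t in `[a, b]].
Proof.
move=> phi_cont.
have normphi_cont : {within `[a, b], continuous (Num.Def.normr \o phi)}.
  by apply: within_continuous_comp => // x _; exact: norm_continuous.
have [m _ m_max] := EVT_max hab normphi_cont.
by exists `|phi m| => _ [t t_ab <-]; exact: m_max.
Qed.

Lemma le_supnorm (phi : R -> E) t :
  E0 a b phi -> t \in `[a, b] -> `|phi t| <= supnorm a b phi.
Proof.
move=> phi_cont t_ab; rewrite /supnorm.
by apply: ub_le_sup; [exact: E0_norm_has_ubound | exists t].
Qed.

Lemma RcP (phi : R -> E) :
  Rc a b c phi <-> E0 a b phi /\ forall t, t \in `[a, b] -> `|phi t| <= `|phi c|.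
Proof.
split=> [[phi_cont sup_c] | [phi_cont le_c]].
  by split=> // t t_ab; rewrite -sup_c; exact: le_supnorm.
split=> //; apply/eqP; rewrite eq_le; apply/andP; split.
  apply: ge_sup; first by exists `|phi c|, c.
  by move=> _ [t t_ab <-]; exact: le_c.
exact: le_supnorm.
Qed.

Lemma Rc0 : Rc a b c (fun _ => 0 : E).
Proof. by apply/RcP; split=> // x; exact: cvg_cst. Qed.

Lemma RcZ (k : R) (phi : R -> E) : Rc a b c phi -> Rc a b c (k *: phi).
Proof.
move=> /RcP[phi_cont le_c]; apply/RcP; split.
  have -> : k *: phi = ( *:%R k) \o phi by [].
  exact: E0_comp (@scaler_continuous R E k) phi_cont.
by move=> t t_ab /=; rewrite !normrZ ler_wpM2l // le_c.
Qed.

Lemma RcN (phi : R -> E) : Rc a b c phi -> Rc a b c (- phi).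
Proof.
have -> : - phi = (-1 : R) *: phi by apply/funext => t /=; rewrite scaleN1r.
exact: RcZ.
Qed.

End NormAttainedAt.

Theorem lemma2 (R : realType) (E : completeNormedModType R) (a b c : R)
  (hab : a <= b) (hc : c \in `[a, b]) :
  let Rcs := Rc a b c : set (R -> E) in
  ((forall phi xi, Rcs phi -> Rcs xi -> Rcs (phi - xi)) <->
   (forall phi psi, Rcs phi -> Rcs psi -> Rcs (phi + psi))) /\
  ((forall phi psi, Rcs phi -> Rcs psi -> Rcs (phi + psi)) <->
   is_linear_subspace Rcs).
Proof.
move=> Rcs; split; split.
- exact: subr_closed_addr_closed.
- move=> Rc_add; apply: addr_closed_subr_closed Rc_add => phi Rphi.
  exact: (RcN hab hc Rphi).
- move=> Rc_add; split; first exact: Rc0 hab hc.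
  by split=> // k phi Rphi; exact: (RcZ hab hc k Rphi).
- by case=> _ [].
Qed.
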